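(* Let $\alpha\in\mathbb R$ and consider the system $$\frac{d}{dt}v_n=-n^2v_n+\alpha v_n-2v_n\|v\|_H^2+v_n|v_n|^2,\quad n\in\mathbb Z,$$ for $v=\sum_nv_ne_n\in H$. The set $\mathcal R$ of its equilibria consists of $v=0$ and of those $v\ne0$ whose nonzero components satisfy the following: with $N_0:=\#\{n:v_n\ne0\}$ and $N_2:=\sum_{n:v_n\ne0}n^2$, $$\|v\|_H^2=\frac{N_0}{2N_0-1}\alpha-\frac{N_2}{2N_0-1}>0,\qquad |v_n|^2=n^2+\frac{\alpha-2N_2}{2N_0-1}>0\ \text{ for } v_n\ne0;$$ and every sequence $(v_n)$ satisfying these conditions gives an equilibrium. Moreover, a nonzero equilibrium $v$ is not hyperbolic if and only if $k^2+\frac{\alpha-2N_2}{2N_0-1}=0$ for some $k$ with $v_k=0$. The zero equilibrium is hyperbolic if and only if $\alpha\ne k^2$ for all $k\in\mathbb Z$. In particular, all equilibria are hyperbolic if $\alpha\notin\mathbb Z$.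
   Context: $e_n=e^{inx}$, $H=L^2_{per}(-\pi,\pi)$ complex-valued with $\|v\|_H^2=\sum|v_n|^2$. The system is invariant under $v_n\mapsto e^{i\phi_n}v_n$ ($\phi_n\in\mathbb R$), so each equilibrium generates a torus of equilibria and can be rotated to a real equilibrium (all $v_n\in\mathbb R$); the real subspace $\{v_n\in\mathbb R\ \forall n\}$ is invariant. Hyperbolicity of an equilibrium $v$ (normal hyperbolicity of its torus) is understood via the real system: for a real equilibrium $v$, the linearization on real perturbations $\theta$ is $\frac d{dt}\theta_n=-n^2\theta_n+\alpha\theta_n-2\theta_n\|v\|_H^2-4v_n(v,\theta)+3\theta_nv_n^2$, and $v$ is hyperbolic iff this linear operator has no zero eigenvalue (nontrivial kernel). *)

From Stdlib Require Import Reals ZArith List.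
From Coquelicot Require Import Coquelicot.
Import ListNotations.
Open Scope R_scope.

(* Sequences indexed by Z: v = sum_n v_n e_n, e_n = e^{inx}. *)

Definition in_H (v : Z -> C) : Prop :=
  ex_series (fun k : nat => (Cmod (v (Z.of_nat k)))^2) /\
  ex_series (fun k : nat => (Cmod (v (- Z.of_nat (S k))%Z))^2).

Definition normH2 (v : Z -> C) : R :=
  Series (fun k : nat => (Cmod (v (Z.of_nat k)))^2) +
  Series (fun k : nat => (Cmod (v (- Z.of_nat (S k))%Z))^2).

Definition is_equilibrium (alpha : R) (v : Z -> C) : Prop :=
  in_H v /\
  forall n : Z,
    (RtoC (- (IZR n)^2) * v n + RtoC alpha * v n
     - RtoC 2 * v n * RtoC (normH2 v)
     + v n * RtoC ((Cmod (v n))^2))%C = 0%C.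

Definition in_Hr (w : Z -> R) : Prop := in_H (fun n => RtoC (w n)).
Definition normH2r (w : Z -> R) : R := normH2 (fun n => RtoC (w n)).
Definition ipr (w th : Z -> R) : R :=
  Series (fun k : nat => w (Z.of_nat k) * th (Z.of_nat k)) +
  Series (fun k : nat => w (- Z.of_nat (S k))%Z * th (- Z.of_nat (S k))%Z).

(* Linearization at a real equilibrium w, applied to a real perturbation th:
   (L th)_n = -n^2 th_n + alpha th_n - 2 th_n ||w||^2 - 4 w_n (w,th) + 3 th_n w_n^2 *)
Definition lin_op (alpha : R) (w th : Z -> R) (n : Z) : R :=
  - (IZR n)^2 * th n + alpha * th n - 2 * th n * normH2r w
  - 4 * w n * ipr w th + 3 * th n * (w n)^2.

Definition hyperbolic_real (alpha : R) (w : Z -> R) : Prop :=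
  ~ (exists th : Z -> R,
        in_Hr th /\ (exists n, th n <> 0) /\ forall n, lin_op alpha w th n = 0).

(* A (complex) equilibrium is hyperbolic iff its rotation to a real
   equilibrium (here: n |-> |v_n|) is hyperbolic. *)
Definition hyperbolic (alpha : R) (v : Z -> C) : Prop :=
  hyperbolic_real alpha (fun n => Cmod (v n)).

Definition support_list (v : Z -> C) (S : list Z) : Prop :=
  NoDup S /\ forall n : Z, v n <> 0%C <-> In n S.

Definition Nzero (S : list Z) : R := INR (length S).
Definition Ntwo (S : list Z) : R := fold_right (fun n acc => (IZR n)^2 + acc) 0 S.

Definition zero_seq : Z -> C := fun _ => 0%C.

From Stdlib Require Import Reals ZArith List Lia Lra Classical FunctionalExtensionality.
From Coquelicot Require Import Coquelicot.
Import ListNotations.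
Open Scope R_scope.

(** For [v n <> 0] the equilibrium equation reads [|v n|^2 = n^2 + lambda] with
    [lambda = 2 ||v||^2 - alpha]; as [|v n|^2 -> 0] the support [S] is finite, and summing
    over it gives [||v||^2 = N2 + N0 lambda], whence [lambda = (alpha - 2 N2) / (2 N0 - 1)].
    At the real equilibrium [w = |v|] the linearization on [S] is
    [2 w_n (w_n th_n - 2 (w, th))]; summing [w_n th_n = 2 (w, th)] over [S] forces
    [(w, th) = 0], so a kernel vector vanishes on [S], while off [S] the linearization is
    multiplication by [-(n^2 + lambda)]. Hence the kernel is nontrivial iff
    [k^2 + lambda = 0] for some [k] off [S] (and then [e_k] spans it), which makes
    [alpha = 2 N2 - (2 N0 - 1) k^2] an integer. *)

Lemma is_series_0 : is_series (fun _ : nat => 0) 0.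
Proof.
  apply (filterlim_ext (fun _ => 0)); last apply filterlim_const.
  intros n. symmetry. apply (sum_n_m_const_zero (G := R_AbelianMonoid)).
Qed.

Lemma is_series_single (a : nat -> R) (j : nat) :
  (forall k, k <> j -> a k = 0) -> is_series a (a j).
Proof.
  revert a. induction j as [|j IH]; intros a Ha; apply is_series_decr_1.
  - change (is_series (fun k => a (S k)) (a 0%nat - a 0%nat)). rewrite Rminus_diag.
    apply (is_series_ext (fun _ => 0)); [|exact is_series_0].
    intros k. symmetry. apply Ha. lia.
  - change (is_series (fun k => a (S k)) (a (S j) - a 0%nat)).
    rewrite (Ha 0%nat), Rminus_0_r by lia.
    apply (IH (fun k => a (S k))). intros k Hk. apply Ha. lia.
Qed.

(** [normH2 v] and [ipr w th] unfold to [zsum] of [fun n => Cmod (v n) ^ 2] and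
    [fun n => w n * th n], so the lemmas on [zsum] apply to them by conversion. *)
Definition zsum (g : Z -> R) : R :=
  Series (fun k : nat => g (Z.of_nat k)) + Series (fun k : nat => g (- Z.of_nat (S k))%Z).

Definition zsummable (g : Z -> R) : Prop :=
  ex_series (fun k : nat => g (Z.of_nat k)) /\
  ex_series (fun k : nat => g (- Z.of_nat (S k))%Z).

Definition fsum (g : Z -> R) (L : list Z) : R := fold_right (fun n acc => g n + acc) 0 L.

Lemma zsum_single (g : Z -> R) (a : Z) :
  (forall n, n <> a -> g n = 0) -> zsummable g /\ zsum g = g a.
Proof.
  intros Hg. unfold zsummable, zsum.
  destruct (Z_lt_le_dec a 0) as [Ha|Ha].
  - assert (Hp : is_series (fun k : nat => g (Z.of_nat k)) (g 0%Z)).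
    { apply (is_series_single (fun k : nat => g (Z.of_nat k)) 0). intros k Hk. apply Hg. lia. }
    assert (Hn : is_series (fun k : nat => g (- Z.of_nat (S k))%Z) (g a)).
    { replace (g a) with (g (- Z.of_nat (S (Z.to_nat (- a - 1))))%Z) by (f_equal; lia).
      apply (is_series_single (fun k : nat => g (- Z.of_nat (S k))%Z)).
      intros k Hk. apply Hg. lia. }
    rewrite (Hg 0%Z) in Hp by lia.
    repeat split; try (eexists; eassumption).
    rewrite (is_series_unique _ _ Hp), (is_series_unique _ _ Hn). ring.
  - assert (Hp : is_series (fun k : nat => g (Z.of_nat k)) (g a)).
    { replace (g a) with (g (Z.of_nat (Z.to_nat a))) by (f_equal; lia).
      apply (is_series_single (fun k : nat => g (Z.of_nat k))). intros k Hk. apply Hg. lia. }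
    assert (Hn : is_series (fun k : nat => g (- Z.of_nat (S k))%Z) (g (-1)%Z)).
    { apply (is_series_single (fun k : nat => g (- Z.of_nat (S k))%Z) 0).
      intros k Hk. apply Hg. lia. }
    rewrite (Hg (-1)%Z) in Hn by lia.
    repeat split; try (eexists; eassumption).
    rewrite (is_series_unique _ _ Hp), (is_series_unique _ _ Hn). ring.
Qed.

Lemma zsum_plus (g h : Z -> R) :
  zsummable g -> zsummable h ->
  zsummable (fun n => g n + h n) /\ zsum (fun n => g n + h n) = zsum g + zsum h.
Proof.
  intros [Gp Gn] [Hp Hn]. unfold zsummable, zsum.
  split; [split|].
  - exact (ex_series_plus _ _ Gp Hp).
  - exact (ex_series_plus _ _ Gn Hn).
  - rewrite (Series_plus _ _ Gp Hp), (Series_plus _ _ Gn Hn). ring.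
Qed.

Lemma fsum_ext_in (g h : Z -> R) (L : list Z) :
  (forall n, In n L -> g n = h n) -> fsum g L = fsum h L.
Proof.
  unfold fsum. induction L as [|a L IH]; intros Hgh; cbn; [reflexivity|].
  rewrite (Hgh a (in_eq a L)), IH; [reflexivity|].
  intros n Hn. apply Hgh. right. exact Hn.
Qed.

Lemma zsum_finite_support (g : Z -> R) (L : list Z) :
  NoDup L -> (forall n, ~ In n L -> g n = 0) -> zsummable g /\ zsum g = fsum g L.
Proof.
  revert g. induction L as [|a L IH]; intros g HL Hg.
  - destruct (zsum_single g 0%Z) as [Hs E]; [intros n _; apply Hg; auto|].
    split; [exact Hs|]. rewrite E. apply Hg. auto.
  - inversion HL as [|? ? HaL HL']; subst.
    set (g1 := fun n => if Z.eq_dec n a then g n else 0).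
    set (g2 := fun n => if Z.eq_dec n a then 0 else g n).
    assert (Hsplit : g = fun n => g1 n + g2 n).
    { apply functional_extensionality. intros n. unfold g1, g2. destruct Z.eq_dec; ring. }
    destruct (zsum_single g1 a) as [S1 E1].
    { intros n Hn. unfold g1. destruct Z.eq_dec; tauto. }
    destruct (IH g2 HL') as [S2 E2].
    { intros n Hn. unfold g2. destruct Z.eq_dec; [reflexivity|].
      apply Hg. intros [H|H]; auto. }
    destruct (zsum_plus g1 g2 S1 S2) as [S12 E12]. rewrite <- Hsplit in S12, E12.
    split; [exact S12|]. rewrite E12, E1, E2. unfold fsum; cbn. f_equal.
    + unfold g1. destruct Z.eq_dec; tauto.
    + apply fsum_ext_in. intros n Hn. unfold g2. destruct Z.eq_dec; congruence.
Qed.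

Lemma fsum_plus (g h : Z -> R) (L : list Z) :
  fsum (fun n => g n + h n) L = fsum g L + fsum h L.
Proof. unfold fsum. induction L as [|a L IH]; cbn; [ring|]. rewrite IH. ring. Qed.

Lemma fsum_const (c : R) (L : list Z) : fsum (fun _ => c) L = Nzero L * c.
Proof.
  unfold fsum, Nzero. induction L as [|a L IH]; cbn -[INR]; [cbn; ring|].
  rewrite IH, S_INR. ring.
Qed.

Lemma fsum_pos (g : Z -> R) (L : list Z) :
  L <> [] -> (forall n, In n L -> 0 < g n) -> 0 < fsum g L.
Proof.
  unfold fsum. induction L as [|a [|b L] IH]; intros HL Hg; [congruence| |].
  - cbn. specialize (Hg a (in_eq a [])). lra.
  - change (0 < g a + fold_right (fun n acc => g n + acc) 0 (b :: L)).
    assert (0 < g a) by (apply Hg; left; reflexivity).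
    assert (0 < fold_right (fun n acc => g n + acc) 0 (b :: L)).
    { apply IH; [congruence|]. intros n Hn. apply Hg. right. exact Hn. }
    lra.
Qed.

Lemma Nzero_ge1 (L : list Z) : L <> [] -> 1 <= Nzero L.
Proof.
  destruct L as [|a L]; intros HL; [congruence|].
  unfold Nzero. cbn [length]. rewrite S_INR. pose proof (pos_INR (length L)). lra.
Qed.

Lemma Cmult_RtoC_eq_0 (z : C) (r : R) : (z * RtoC r)%C = 0%C <-> z = 0%C \/ r = 0.
Proof.
  split.
  - intros H. destruct (classic (z = 0%C)) as [Hz|Hz]; [left; exact Hz|right].
    apply NNPP. intros Hr. apply (Cmult_neq_0 z (RtoC r) Hz); [|exact H].
    intros E. apply Hr. exact (f_equal fst E).
  - intros [-> | ->]; [apply Cmult_0_l|apply Cmult_0_r].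
Qed.

Lemma equilibrium_iff (alpha : R) (v : Z -> C) :
  is_equilibrium alpha v <->
  in_H v /\ forall n, v n <> 0%C -> Cmod (v n) ^ 2 = IZR n ^ 2 + (2 * normH2 v - alpha).
Proof.
  assert (Hfactor : forall n,
    (RtoC (- IZR n ^ 2) * v n + RtoC alpha * v n - RtoC 2 * v n * RtoC (normH2 v)
     + v n * RtoC (Cmod (v n) ^ 2))%C
    = (v n * RtoC (Cmod (v n) ^ 2 - (IZR n ^ 2 + (2 * normH2 v - alpha))))%C).
  { intros n. destruct (v n) as [x y]. unfold RtoC, Cmult, Cplus, Cminus, Copp; cbn.
    f_equal; ring. }
  unfold is_equilibrium. setoid_rewrite Hfactor. setoid_rewrite Cmult_RtoC_eq_0.
  split; intros [HH Hn]; split; try exact HH; intros n.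
  - intros Hv. destruct (Hn n) as [H|H]; [contradiction|lra].
  - destruct (classic (v n = 0%C)) as [Hv|Hv]; [left; exact Hv|right].
    rewrite (Hn n Hv). ring.
Qed.

Lemma ex_series_eventually_small (a : nat -> R) (eps : R) :
  0 < eps -> ex_series a -> exists N : nat, forall k, (N <= k)%nat -> Rabs (a k) < eps.
Proof.
  intros Heps Ha. apply ex_series_lim_0, is_lim_seq_spec in Ha.
  destruct (Ha (mkposreal eps Heps)) as [N HN]. exists N. intros k Hk.
  rewrite <- (Rminus_0_r (a k)). exact (HN k Hk).
Qed.

Lemma in_H_eventually_small (v : Z -> C) :
  in_H v -> exists B : nat, forall n, (Z.of_nat B < Z.abs n)%Z -> Cmod (v n) ^ 2 < 1.
Proof.
  intros [Hp Hn].
  destruct (ex_series_eventually_small _ 1 Rlt_0_1 Hp) as [Np HNp].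
  destruct (ex_series_eventually_small _ 1 Rlt_0_1 Hn) as [Nn HNn].
  exists (Nat.max Np Nn). intros n Hbig.
  destruct (Z_le_gt_dec 0 n) as [H0|H0].
  - specialize (HNp (Z.to_nat n) ltac:(lia)).
    rewrite Z2Nat.id, Rabs_pos_eq in HNp by (lia || apply pow2_ge_0). exact HNp.
  - specialize (HNn (Z.to_nat (- n - 1)) ltac:(lia)).
    replace (- Z.of_nat (S (Z.to_nat (- n - 1))))%Z with n in HNn by lia.
    rewrite Rabs_pos_eq in HNn by apply pow2_ge_0. exact HNn.
Qed.

Lemma equilibrium_support_bounded (alpha : R) (v : Z -> C) :
  is_equilibrium alpha v ->
  exists B : nat, forall n, v n <> 0%C -> (Z.abs n <= Z.of_nat B)%Z.
Proof.
  intros [HH Hmod]%equilibrium_iff.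
  destruct (in_H_eventually_small v HH) as [B1 HB1].
  destruct (INR_unbounded (Rabs (2 * normH2 v - alpha) + 1)) as [M HM].
  exists (Nat.max B1 M). intros n Hv. apply Z.nlt_ge. intros Hbig.
  assert (Hn2 : INR M <= IZR n ^ 2).
  { replace (IZR n ^ 2) with (IZR (n * n)) by (rewrite mult_IZR; ring).
    rewrite INR_IZR_INZ. apply IZR_le. nia. }
  specialize (HB1 n ltac:(lia)). rewrite (Hmod n Hv) in HB1.
  pose proof (Rle_abs (- (2 * normH2 v - alpha))). rewrite Rabs_Ropp in *. lra.
Qed.

Lemma support_list_of_bounded (v : Z -> C) (B : nat) :
  (forall n, v n <> 0%C -> (Z.abs n <= Z.of_nat B)%Z) -> exists S, support_list v S.
Proof.
  intros HB.
  set (nonzero := fun n => if Req_EM_T (Cmod (v n)) 0 then false else true).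
  exists (filter nonzero (map (fun k => Z.of_nat k - Z.of_nat B)%Z (seq 0 (2 * B + 1)))).
  split.
  - apply NoDup_filter, NoDup_map_NoDup_ForallPairs; [|apply seq_NoDup].
    intros x y _ _ Hxy. lia.
  - intros n. rewrite filter_In, in_map_iff. unfold nonzero.
    destruct Req_EM_T as [E|E].
    + split; [intros Hv; contradict Hv; exact (Cmod_eq_0 _ E)|intros [_ F]; discriminate].
    + split; [|intros _ Hv; rewrite Hv, Cmod_0 in E; contradiction].
      intros Hv. split; [|reflexivity].
      specialize (HB n Hv). exists (Z.to_nat (n + Z.of_nat B)).
      rewrite in_seq. lia.
Qed.

Lemma support_list_zero (v : Z -> C) (S : list Z) (n : Z) :
  support_list v S -> ~ In n S -> v n = 0%C.
Proof. intros [_ HS] Hn. apply NNPP. intros Hv. exact (Hn (proj1 (HS n) Hv)). Qed.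

Lemma support_list_normH2 (v : Z -> C) (S : list Z) :
  support_list v S -> in_H v /\ normH2 v = fsum (fun n => Cmod (v n) ^ 2) S.
Proof.
  intros HS. apply (zsum_finite_support (fun n => Cmod (v n) ^ 2)); [apply HS|].
  intros n Hn. rewrite (support_list_zero v S n HS Hn), Cmod_0. ring.
Qed.

Lemma equilibrium_zero_or_support (alpha : R) (v : Z -> C) :
  is_equilibrium alpha v -> v = zero_seq \/ exists S, support_list v S /\ S <> [].
Proof.
  intros He. destruct (equilibrium_support_bounded alpha v He) as [B HB].
  destruct (support_list_of_bounded v B HB) as [[|a S] HS].
  - left. apply functional_extensionality. intros n.
    exact (support_list_zero v [] n HS (in_nil (a := n))).
  - right. exists (a :: S). split; [exact HS|discriminate].
Qed.

Definition shift_of_support (alpha : R) (S : list Z) : R :=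
  (alpha - 2 * Ntwo S) / (2 * Nzero S - 1).

Lemma equilibrium_shift (alpha : R) (v : Z -> C) (S : list Z) :
  is_equilibrium alpha v -> support_list v S -> S <> [] ->
  2 * normH2 v - alpha = shift_of_support alpha S.
Proof.
  intros He HS Hne. pose proof (Nzero_ge1 S Hne) as HN0.
  destruct (proj1 (equilibrium_iff alpha v) He) as [_ Hmod].
  destruct (support_list_normH2 v S HS) as [_ HN].
  assert (Hsum : normH2 v = Ntwo S + Nzero S * (2 * normH2 v - alpha)).
  { rewrite HN at 1. rewrite (fsum_ext_in _ (fun n => IZR n ^ 2 + (2 * normH2 v - alpha))).
    - rewrite fsum_plus, fsum_const. reflexivity.
    - intros n Hn. apply Hmod, HS, Hn. }
  unfold shift_of_support. apply Rmult_eq_reg_r with (2 * Nzero S - 1); [|lra].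
  unfold Rdiv. rewrite Rmult_assoc, Rinv_l, Rmult_1_r by lra. nra.
Qed.

Lemma equilibrium_closed_form (alpha : R) (v : Z -> C) (S : list Z) :
  is_equilibrium alpha v -> support_list v S -> S <> [] ->
  normH2 v = Nzero S / (2 * Nzero S - 1) * alpha - Ntwo S / (2 * Nzero S - 1) /\
  normH2 v > 0 /\
  (forall n, In n S ->
     Cmod (v n) ^ 2 = IZR n ^ 2 + shift_of_support alpha S /\
     IZR n ^ 2 + shift_of_support alpha S > 0).
Proof.
  intros He HS Hne. pose proof (Nzero_ge1 S Hne) as HN0.
  pose proof (equilibrium_shift alpha v S He HS Hne) as Hshift.
  destruct (proj1 (equilibrium_iff alpha v) He) as [_ Hmod].
  assert (Hpos : forall n, In n S -> 0 < Cmod (v n) ^ 2).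
  { intros n Hn. apply pow_lt, Cmod_gt_0, HS, Hn. }
  split; [|split].
  - unfold shift_of_support in Hshift. apply Rmult_eq_reg_l with 2; [|lra].
    replace (2 * normH2 v) with (alpha + (alpha - 2 * Ntwo S) / (2 * Nzero S - 1)) by lra.
    field. lra.
  - rewrite (proj2 (support_list_normH2 v S HS)). apply fsum_pos; assumption.
  - intros n Hn. rewrite <- Hshift, <- (Hmod n (proj2 (proj2 HS n) Hn)).
    split; [reflexivity|]. apply Hpos, Hn.
Qed.

Lemma support_list_zero_seq : support_list zero_seq [].
Proof.
  split; [constructor|]. intros n. split; [intros H; contradiction H; reflexivity|intros []].
Qed.

Lemma zero_seq_equilibrium (alpha : R) : is_equilibrium alpha zero_seq.
Proof.
  apply equilibrium_iff. split.
  - apply (support_list_normH2 zero_seq [] support_list_zero_seq).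
  - intros n H. contradiction H. reflexivity.
Qed.

Lemma equilibrium_of_closed_form (alpha : R) (v : Z -> C) (S : list Z) :
  support_list v S -> S <> [] ->
  normH2 v = Nzero S / (2 * Nzero S - 1) * alpha - Ntwo S / (2 * Nzero S - 1) ->
  (forall n, In n S -> Cmod (v n) ^ 2 = IZR n ^ 2 + shift_of_support alpha S) ->
  is_equilibrium alpha v.
Proof.
  intros HS Hne HN Hmod. pose proof (Nzero_ge1 S Hne) as HN0.
  apply equilibrium_iff. split; [apply (support_list_normH2 v S HS)|].
  intros n Hv. rewrite (Hmod n (proj1 (proj2 HS n) Hv)), HN.
  unfold shift_of_support. field. lra.
Qed.

Definition delta (k : Z) : Z -> R := fun n => if Z.eq_dec n k then 1 else 0.

Lemma in_Hr_delta (k : Z) : in_Hr (delta k).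
Proof.
  apply (zsum_single (fun n => Cmod (RtoC (delta k n)) ^ 2) k).
  intros n Hn. unfold delta. destruct Z.eq_dec; [contradiction|]. rewrite Cmod_0. ring.
Qed.

Lemma ipr_eq_0 (w th : Z -> R) : (forall n, w n * th n = 0) -> ipr w th = 0.
Proof.
  intros H. apply (zsum_finite_support (fun n => w n * th n) []); [constructor|auto].
Qed.

Lemma normH2r_Cmod (v : Z -> C) : normH2r (fun n => Cmod (v n)) = normH2 v.
Proof.
  unfold normH2r, normH2. f_equal; apply Series_ext; intros k;
  rewrite Cmod_R, Rabs_pos_eq by apply Cmod_ge_0; reflexivity.
Qed.

Lemma lin_op_off_support (alpha : R) (w th : Z -> R) (n : Z) :
  w n = 0 -> lin_op alpha w th n = th n * (- IZR n ^ 2 + alpha - 2 * normH2r w).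
Proof. intros Hw. unfold lin_op. rewrite Hw. ring. Qed.

Lemma not_hyperbolic_real_of_delta (alpha : R) (w : Z -> R) (k : Z) :
  w k = 0 -> - IZR k ^ 2 + alpha - 2 * normH2r w = 0 -> ~ hyperbolic_real alpha w.
Proof.
  intros Hw Hk Hhyp. apply Hhyp. exists (delta k).
  split; [apply in_Hr_delta|split].
  - exists k. unfold delta. destruct Z.eq_dec; [lra|congruence].
  - intros n. unfold lin_op. rewrite ipr_eq_0.
    + unfold delta. destruct Z.eq_dec as [->|]; [rewrite Hw; lra|ring].
    + intros m. unfold delta. destruct Z.eq_dec as [->|]; [rewrite Hw|]; ring.
Qed.

Lemma zero_equilibrium_hyperbolic_iff (alpha : R) :
  hyperbolic alpha zero_seq <-> forall k : Z, alpha <> IZR k ^ 2.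
Proof.
  unfold hyperbolic. set (w := fun n => Cmod (zero_seq n)).
  assert (Hw : forall n, w n = 0) by (intros n; apply Cmod_0).
  assert (HN : normH2r w = 0).
  { unfold w. rewrite normH2r_Cmod.
    exact (proj2 (support_list_normH2 zero_seq [] support_list_zero_seq)). }
  split.
  - intros Hhyp k Hk. apply (not_hyperbolic_real_of_delta alpha w k (Hw k)); [lra|exact Hhyp].
  - intros Hroot [th [_ [[n Hn] Hker]]]. apply (Hroot n).
    specialize (Hker n). rewrite lin_op_off_support, HN in Hker by apply Hw.
    destruct (Rmult_integral _ _ Hker); [contradiction|lra].
Qed.

Lemma lin_op_at_nonzero (alpha : R) (v : Z -> C) (th : Z -> R) (m : Z) :
  is_equilibrium alpha v -> v m <> 0%C ->
  lin_op alpha (fun n => Cmod (v n)) th m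
  = 2 * Cmod (v m) * (Cmod (v m) * th m - 2 * ipr (fun n => Cmod (v n)) th).
Proof.
  intros He Hv. unfold lin_op. rewrite normH2r_Cmod.
  pose proof (proj2 (proj1 (equilibrium_iff alpha v) He) m Hv) as Hmod.
  assert (E : th m * (Cmod (v m) ^ 2 - (IZR m ^ 2 + (2 * normH2 v - alpha))) = 0)
    by (rewrite Hmod; ring).
  lra.
Qed.

Lemma equilibrium_kernel_vanishes_on_support (alpha : R) (v : Z -> C) (S : list Z)
    (th : Z -> R) :
  is_equilibrium alpha v -> support_list v S -> S <> [] ->
  (forall n, lin_op alpha (fun n => Cmod (v n)) th n = 0) ->
  forall m, In m S -> th m = 0.
Proof.
  intros He HS Hne Hker. set (p := ipr (fun n => Cmod (v n)) th).
  assert (Hw : forall m, In m S -> 0 < Cmod (v m)).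
  { intros m Hm. apply Cmod_gt_0, HS, Hm. }
  assert (Hwth : forall m, In m S -> Cmod (v m) * th m = 2 * p).
  { intros m Hm. specialize (Hker m). specialize (Hw m Hm).
    rewrite (lin_op_at_nonzero alpha v th m He (proj2 (proj2 HS m) Hm)) in Hker.
    fold p in Hker. destruct (Rmult_integral _ _ Hker); lra. }
  assert (Hp : p = 0).
  { assert (Hsum : p = Nzero S * (2 * p)).
    { rewrite <- fsum_const, <- (fsum_ext_in _ _ S Hwth).
      apply (zsum_finite_support (fun n => Cmod (v n) * th n)); [apply HS|].
      intros n Hn. rewrite (support_list_zero v S n HS Hn), Cmod_0. ring. }
    pose proof (Nzero_ge1 S Hne). nra. }
  intros m Hm. specialize (Hwth m Hm). specialize (Hw m Hm). rewrite Hp in Hwth. nra.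
Qed.

Lemma nonzero_equilibrium_not_hyperbolic_iff (alpha : R) (v : Z -> C) (S : list Z) :
  is_equilibrium alpha v -> support_list v S -> S <> [] ->
  ~ hyperbolic alpha v <-> exists k, v k = 0%C /\ IZR k ^ 2 + shift_of_support alpha S = 0.
Proof.
  intros He HS Hne. unfold hyperbolic.
  pose proof (equilibrium_shift alpha v S He HS Hne) as Hshift.
  rewrite <- normH2r_Cmod in Hshift.
  split.
  - intros [th [_ [[k Hk] Hker]]]%NNPP. exists k.
    assert (Hv : v k = 0%C).
    { apply (support_list_zero v S k HS). intros Hin.
      exact (Hk (equilibrium_kernel_vanishes_on_support alpha v S th He HS Hne Hker k Hin)). }
    split; [exact Hv|].
    specialize (Hker k). rewrite lin_op_off_support in Hker by (rewrite Hv; apply Cmod_0).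
    destruct (Rmult_integral _ _ Hker); [contradiction|lra].
  - intros [k [Hv Hk]]. apply not_hyperbolic_real_of_delta with k.
    + cbn. rewrite Hv. apply Cmod_0.
    + lra.
Qed.

Lemma Ntwo_IZR (L : list Z) : Ntwo L = IZR (fold_right (fun n acc => n * n + acc)%Z 0%Z L).
Proof.
  unfold Ntwo. induction L as [|a L IH]; cbn [fold_right]; [reflexivity|].
  rewrite IH, plus_IZR, mult_IZR. ring.
Qed.

Lemma shift_of_support_root_integral (alpha : R) (S : list Z) (k : Z) :
  S <> [] -> IZR k ^ 2 + shift_of_support alpha S = 0 -> exists z : Z, alpha = IZR z.
Proof.
  intros Hne Hk. pose proof (Nzero_ge1 S Hne) as HN0. unfold shift_of_support in Hk.
  exists (2 * fold_right (fun n acc => n * n + acc)%Z 0%Z S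
          - (2 * Z.of_nat (length S) - 1) * (k * k))%Z.
  rewrite minus_IZR, !mult_IZR, minus_IZR, mult_IZR, <- Ntwo_IZR, <- INR_IZR_INZ.
  fold (Nzero S). cbn [IZR IPR].
  apply Rmult_eq_compat_r with (r := 2 * Nzero S - 1) in Hk.
  field_simplify in Hk; lra.
Qed.

Lemma hyperbolic_of_nonintegral (alpha : R) :
  (forall k : Z, alpha <> IZR k) ->
  forall v : Z -> C, is_equilibrium alpha v -> hyperbolic alpha v.
Proof.
  intros Halpha v He.
  destruct (equilibrium_zero_or_support alpha v He) as [-> | [S [HS Hne]]].
  - apply zero_equilibrium_hyperbolic_iff. intros k Hk.
    apply (Halpha (k * k)%Z). rewrite mult_IZR, Hk. ring.
  - apply NNPP. intros Hnh.
    destruct (proj1 (nonzero_equilibrium_not_hyperbolic_iff alpha v S He HS Hne) Hnh)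
      as [k [_ Hk]].
    destruct (shift_of_support_root_integral alpha S k Hne Hk) as [z Hz].
    exact (Halpha z Hz).
Qed.

Theorem lemma5p1 (alpha : R) :
  (* characterization of the set of equilibria *)
  (forall v : Z -> C,
     is_equilibrium alpha v <->
     (v = zero_seq \/
      exists S : list Z,
        support_list v S /\ S <> [] /\
        normH2 v = Nzero S / (2 * Nzero S - 1) * alpha - Ntwo S / (2 * Nzero S - 1) /\
        normH2 v > 0 /\
        (forall n, In n S ->
           (Cmod (v n))^2 = (IZR n)^2 + (alpha - 2 * Ntwo S) / (2 * Nzero S - 1) /\
           (IZR n)^2 + (alpha - 2 * Ntwo S) / (2 * Nzero S - 1) > 0))) /\
  (* non-hyperbolicity of nonzero equilibria *)
  (forall (v : Z -> C) (S : list Z),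
     is_equilibrium alpha v -> support_list v S -> S <> [] ->
     (~ hyperbolic alpha v <->
      exists k : Z, v k = 0%C /\
        (IZR k)^2 + (alpha - 2 * Ntwo S) / (2 * Nzero S - 1) = 0)) /\
  (* the zero equilibrium *)
  (hyperbolic alpha zero_seq <-> forall k : Z, alpha <> (IZR k)^2) /\
  (* in particular *)
  ((forall k : Z, alpha <> IZR k) ->
     forall v : Z -> C, is_equilibrium alpha v -> hyperbolic alpha v).
Proof.
  split; [|split; [|split]].
  - intros v. split.
    + intros He. destruct (equilibrium_zero_or_support alpha v He) as [Hz | [S [HS Hne]]].
      * left. exact Hz.
      * right. exists S. split; [exact HS|split; [exact Hne|]].
        exact (equilibrium_closed_form alpha v S He HS Hne).
    + intros [-> | [S [HS [Hne [HN [_ Hmod]]]]]]; [apply zero_seq_equilibrium|].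
      apply (equilibrium_of_closed_form alpha v S HS Hne HN).
      intros n Hn. apply (Hmod n Hn).
  - exact (nonzero_equilibrium_not_hyperbolic_iff alpha).
  - exact (zero_equilibrium_hyperbolic_iff alpha).
  - exact (hyperbolic_of_nonintegral alpha).
Qed.
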